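(* Let $c\in\mathbb{C}$ and $\alpha,\bar\alpha,\beta,\bar\beta\in\mathbb{C}$ with $\alpha,\bar\alpha\neq0$, $\beta\neq\bar\beta$ and $\beta-\bar\beta+c=0$. Consider $TSV(c)$-module extensions $0\to M_{\bar\alpha,\bar\beta}\to E\to M_{\alpha,\beta}\to0$ written as $E=\mathbb{C}[\partial]v_{\bar\alpha}\oplus\mathbb{C}[\partial]v_\alpha$ with $L_\lambda v_\alpha=(\partial+\alpha\lambda+\beta)v_\alpha+f(\partial,\lambda)v_{\bar\alpha}$, $Y_\lambda v_\alpha=g(\partial,\lambda)v_{\bar\alpha}$, $M_\lambda v_\alpha=h(\partial,\lambda)v_{\bar\alpha}$. Then $h=0$, every such extension is equivalent to one with $f=0$, and an extension with $f=h=0$ is nontrivial iff $g\neq0$. The nonzero $g$ that occur (with $f=h=0$) are exactly the nonzero scalar multiples of the following, under the stated conditions ($m$ = total degree of $g$): (a) $m=0$: $\alpha-\bar\alpha=-\frac12$, $g=1$; (b) $m=1$: $\alpha-\bar\alpha=\frac12$, $g=\partial+2\bar\alpha\lambda-2\bar\alpha c+\bar\beta$; (c) $m=2$: $\alpha=1$, $\bar\alpha=-\frac12$, $g=\partial^2+2(1+2\bar\alpha)\partial\lambda+2\bar\alpha\lambda^2+a_{10}\partial+a_{11}\lambda+a_{00}$ with $a_{10}=2\bar\beta-2(1+2\bar\alpha)c$, $a_{11}=-4c\bar\alpha+2(1+2\bar\alpha)\bar\beta$, $a_{00}=\bar\beta^2-2c\bar\beta(1+2\bar\alpha)+2c^2\bar\alpha$;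 and no other degrees occur.
   Context: A conformal module over a Lie conformal algebra $\mathcal{R}$ is a $\mathbb{C}[\partial]$-module $V$ with $\mathbb{C}$-linear maps $a\otimes v\mapsto a_\lambda v\in V[\lambda]$ such that $(\partial a)_\lambda v=-\lambda a_\lambda v$, $a_\lambda(\partial v)=(\partial+\lambda)a_\lambda v$, and $a_\lambda(b_\mu v)-b_\mu(a_\lambda v)=[a_\lambda b]_{\lambda+\mu}v$. $TSV(c)$ ($c\in\mathbb{C}$) is the free $\mathbb{C}[\partial]$-module on $L,Y,M$ with $[L_\lambda L]=(\partial+2\lambda)L$, $[L_\lambda Y]=(\partial+\frac32\lambda+c)Y$, $[L_\lambda M]=(\partial+2c)M$, $[Y_\lambda Y]=(\partial+2\lambda)(-\partial-2c)M$, $[Y_\lambda M]=[M_\lambda M]=0$. For $\alpha\neq0$, $M_{\alpha,\beta}=\mathbb{C}[\partial]v$ has $L_\lambda v=(\partial+\alpha\lambda+\beta)v$, $Y_\lambda v=M_\lambda v=0$. In $E$, $\mathbb{C}[\partial]v_{\bar\alpha}$ is a submodule isomorphic to $M_{\bar\alpha,\bar\beta}$. Equivalence of extensions means a module homomorphism between middle terms compatible with the identities on the end terms; trivial means equivalent to the direct sum extension. *)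

From HB Require Import structures.
From mathcomp Require Import all_boot all_order all_algebra.
Set Implicit Arguments. Unset Strict Implicit. Unset Printing Implicit Defensive.
Import Order.TTheory GRing.Theory Num.Theory.
Local Open Scope ring_scope.

(* free generators L, Y, M of TSV(c) over C[d] *)
Inductive gen := GL | GY | GM.
(* basis of E: Vb = v_{bar alpha} (submodule), Va = v_alpha *)
Inductive bas := Vb | Va.

Section TSV.
Variable C : numClosedFieldType.

Definition sumg (F : gen -> C) : C := F GL + F GY + F GM.
Definition sumb (F : bas -> C) : C := F Vb + F Va.

(* two-variable polynomials p(d, l) : {poly {poly C}}, outer variable = lambda,
   inner variable = d (partial) *)
Definition ev2 (p : {poly {poly C}}) (d l : C) : C := (p.[l%:P]).[d].
Definition Dpar : {poly {poly C}} := ('X)%:P.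
Definition Lam  : {poly {poly C}} := 'X.
Definition cst (k : C) : {poly {poly C}} := k%:P%:P.

Variables (c al be alb beb : C).

(* [X_lambda Z] = sum_W br X Z W (d, lambda) W  in TSV(c);
   the pairs not listed in the paper are obtained by skew-symmetry
   [b_l a] = -[a_{-l-d} b]. *)
Definition br (X Z W : gen) (d l : C) : C :=
  match X, Z, W with
  | GL, GL, GL => d + 2%:R * l
  | GL, GY, GY => d + 3%:R / 2%:R * l + c
  | GL, GM, GM => d + 2%:R * c
  | GY, GL, GY => d / 2%:R + 3%:R / 2%:R * l - c
  | GM, GL, GM => - (d + 2%:R * c)
  | GY, GY, GM => (d + 2%:R * l) * (- d - 2%:R * c)
  | _, _, _ => 0
  end.

(* X_lambda e_i = sum_k ecoef f g h X i k (d, lambda) e_k in E *)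
Definition ecoef (f g h : {poly {poly C}}) (X : gen) (i k : bas) (d l : C) : C :=
  match X, i, k with
  | GL, Vb, Vb => d + alb * l + beb
  | GL, Va, Vb => ev2 f d l
  | GL, Va, Va => d + al * l + be
  | GY, Va, Vb => ev2 g d l
  | GM, Va, Vb => ev2 h d l
  | _, _, _ => 0
  end.

(* lambda-action of an element sum_X s_X(d) X of R (s given as functions of d)
   on an element sum_i w_i(d) e_i of E (possibly depending on further
   parameters), extended by conformal sesquilinearity:
   (p(d)X)_l (q(d) e_i) = p(-l) q(d+l) X_l e_i. *)
Definition actf (f g h : {poly {poly C}}) (s : gen -> C -> C) (l : C)
    (w : bas -> C -> C) : bas -> C -> C :=
  fun k d => sumg (fun X => sumb (fun i => s X (- l) * w i (d + l) * ecoef f g h X i k d l)).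

Definition polF (A : Type) (a : A -> {poly C}) : A -> C -> C := fun x y => (a x).[y].

(* [a_l b] for a, b in R, as coefficients (functions of d) on L, Y, M *)
Definition brk (a b : gen -> {poly C}) (l : C) : gen -> C -> C :=
  fun W d => sumg (fun X => sumg (fun Z => (a X).[- l] * (b Z).[d + l] * br X Z W d l)).

(* E (given by f, g, h) is a conformal TSV(c)-module: the Jacobi-type axiom
   a_l (b_m w) - b_m (a_l w) = [a_l b]_{l+m} w for all a, b in R, w in E,
   as an identity in E[l, m] (checked pointwise in d, l, m). *)
Definition is_ext (f g h : {poly {poly C}}) : Prop :=
  forall (a b : gen -> {poly C}) (w : bas -> {poly C}) (l m d : C) (k : bas),
    actf f g h (polF a) l (actf f g h (polF b) m (polF w)) k d
    - actf f g h (polF b) m (actf f g h (polF a) l (polF w)) k d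
    = actf f g h (brk a b l) (l + m) (polF w) k d.

(* C[d]-linear map E -> E' with phi(e_i) = sum_k phi i k e'_k *)
Definition phiF (phi : bas -> bas -> {poly C}) (u : bas -> C -> C) : bas -> C -> C :=
  fun k d => sumb (fun i => u i d * (phi i k).[d]).

(* equivalence of extensions: a module homomorphism E -> E' compatible with
   the identity on M_{bar alpha, bar beta} (inclusion) and on M_{alpha,beta}
   (projection) *)
Definition ext_equiv (f g h f' g' h' : {poly {poly C}}) : Prop :=
  exists phi : bas -> bas -> {poly C},
    [/\ forall (a : gen -> {poly C}) (w : bas -> {poly C}) (l d : C) (k : bas),
          phiF phi (actf f g h (polF a) l (polF w)) k d
          = actf f' g' h' (polF a) l (phiF phi (polF w)) k d,
        forall (q : {poly C}) (k : bas) (d : C),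
          phiF phi (fun i x => if i is Vb then q.[x] else 0) k d
          = (if k is Vb then q.[d] else 0)
      & forall (w : bas -> {poly C}) (d : C),
          phiF phi (polF w) Va d = (w Va).[d]].

Definition ext_trivial (f g h : {poly {poly C}}) : Prop :=
  ext_equiv f g h 0 0 0.

End TSV.

From HB Require Import structures.
From mathcomp Require Import all_boot all_order all_algebra.
From mathcomp Require Import ring.
Set Implicit Arguments. Unset Strict Implicit. Unset Printing Implicit Defensive.
Import GRing.Theory Num.Theory.
Local Open Scope ring_scope.

(* The module axiom, evaluated on pairs of generators acting on v_alpha, yields
   scalar functional equations for the coefficient polynomials f, g, h:
   - (Y, Y) gives (l - m)(l + m - 2c) h(d, l + m) = 0, hence h = 0;
   - (L, L) at m = 0 expresses f through f(d, 0); since be <> beb this gives a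
     change of basis v_alpha |-> v_alpha + p(d) v_bar that removes f;
   - (L, Y) gives the equation [Y_equation] for g which, when f = h = 0, is in
     turn sufficient for the whole module axiom.
   An equivalence fixes v_bar and so commutes with Y: the extension with
   f = h = 0 is trivial exactly when g = 0.
   For the classification we shift variables, gshift x y = g(x - beb, y + c),
   turning [Y_equation] into
     gshift (x+l) y (x + alb l) - (x + y + al l) gshift x y = (l/2 - y) gshift x (l+y).
   At x = 0 this determines gshift from its slice Q(y) = gshift 0 y, and its
   derivative in l at 0 is Euler's equation y Q' = (al - alb + 1/2) Q, so
   Q = q y^n with al - alb + 1/2 = n.  The instance x = 1, y = 0 yields a
   polynomial identity excluding n >= 4, one more instance excludes n = 3, and
   n = 0, 1, 2 produce the three families, which conversely satisfy the
   equation by direct computation. *)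

(* Over a number domain a polynomial vanishing everywhere is zero (the naturals
   provide infinitely many roots); used to turn pointwise identities into
   polynomial ones. *)
Lemma poly_eq0_pt (R : numDomainType) (p : {poly R}) :
  (forall x, p.[x] = 0) -> p = 0.
Proof.
move=> p0; apply: (@roots_geq_poly_eq0 _ p [seq i%:R | i <- iota 0 (size p)]).
- by apply/allP => x /mapP [i _ ->]; rewrite /root p0.
- by rewrite map_inj_uniq ?iota_uniq // => i j /eqP; rewrite eqr_nat => /eqP.
- by rewrite size_map size_iota.
Qed.

Lemma eq_from_scaled (R : pzRingType) (a b x y k : R) :
  a = b -> x - y = k * (a - b) -> x = y.
Proof. by move=> ->; rewrite subrr mulr0 => /eqP; rewrite subr_eq0 => /eqP. Qed.

Lemma eq_from_scaled2 (R : pzRingType) (a1 b1 a2 b2 x y k1 k2 : R) :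
  a1 = b1 -> a2 = b2 -> x - y = k1 * (a1 - b1) + k2 * (a2 - b2) -> x = y.
Proof. by move=> -> ->; rewrite !subrr !mulr0 addr0 => /eqP; rewrite subr_eq0 => /eqP. Qed.

Lemma coefXD1 (R : nzRingType) (n k : nat) : (('X + 1) ^+ n : {poly R})`_k = 'C(n, k)%:R.
Proof.
elim: n k => [|n IHn] k; first by rewrite expr0 coef1 bin0n; case: k.
rewrite exprS mulrDl mul1r coefD coefXM; case: k => [|k] /=.
  by rewrite add0r IHn !bin0.
by rewrite !IHn binS natrD addrC.
Qed.

Lemma euler_monomial (R : numDomainType) (p : {poly R}) (N : R) :
  'X * p^`() = N *: p -> p != 0 ->
  N = (size p).-1%:R /\ p = lead_coef p *: 'X^((size p).-1).
Proof.
move=> euler p_neq0.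
have coefE j : p`_j * j%:R = N * p`_j.
  have := congr1 (fun r : {poly R} => r`_j) euler.
  rewrite /= coefXM coefZ; case: j => [|j] /=; first by rewrite mulr0.
  by rewrite coef_deriv mulr_natr.
have lc_neq0 : lead_coef p != 0 by rewrite lead_coef_eq0.
have N_deg : N = (size p).-1%:R.
  by apply: (mulIf lc_neq0); rewrite -coefE mulrC.
split=> //; apply/polyP => j; rewrite coefZ coefXn.
have [-> | j_neq] := eqVneq j (size p).-1; first by rewrite mulr1.
have := coefE j; rewrite N_deg mulrC => /eqP; rewrite -subr_eq0 -mulrBl mulf_eq0.
by rewrite subr_eq0 eqr_nat (negbTE j_neq) => /eqP ->; rewrite mulr0.
Qed.

(* For n >= 4, (X + 1)^n (1 + aX + X^2) never equals 1 + bX + bX^(n+1) + X^(n+2):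
   the coefficients of X^2 and X^3 would force n (n + 1) (n + 2) (n - 3) = 0. *)
Lemma binomial_trinomial_neq (R : numFieldType) (n : nat) (a b : R) :
  (3 < n)%N ->
  ('X + 1) ^+ n * (1 + a *: 'X + 'X^2)
    <> 1 + b *: 'X + b *: 'X^(n.+1) + 'X^(n.+2) :> {poly R}.
Proof.
case: n => [|[|[|[|m]]]] // _; set n := m.+4 => E.
have coef_eq k : (k < 2)%N ->
    'C(n, k.+2)%:R + a * 'C(n, k.+1)%:R + 'C(n, k)%:R = 0 :> R.
  move=> k_lt2; have := congr1 (fun p : {poly R} => p`_k.+2) E.
  rewrite /= !mulrDr mulr1 -scalerAr !coefD !coefZ coefMX coefMXn !coefXD1.
  rewrite !coefXn coef1 coefX /= !eqSS !subSS subn0 => ->.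
  by case: k k_lt2 => [|[|]] //; rewrite !mulr0 !addr0.
have := coef_eq 1%N isT; have := coef_eq 0%N isT.
rewrite !bin0 !bin1; set x : R := n%:R.
have x1 : x - 1 = (m.+3)%:R by rewrite /x /n -natr1 addrK.
have x2 : x - 2%:R = (m.+2)%:R by rewrite /x /n -(addn2 m.+2) natrD addrK.
have C2 : 'C(n, 2)%:R = x * (x - 1) / 2%:R.
  have h2 : ('C(n, 2) * 2 = n * m.+3)%N.
    by have := bin_ffact n 2; rewrite /= !ffactnS ffactn0 muln1.
  by rewrite x1 -natrM -h2 natrM mulfK ?pnatr_eq0.
have C3 : 'C(n, 3)%:R = x * (x - 1) * (x - 2%:R) / 6%:R.
  have h3 : ('C(n, 3) * 6 = n * m.+3 * m.+2)%N.
    by have := bin_ffact n 3; rewrite /= !ffactnS ffactn0 muln1 mulnA.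
  by rewrite x1 x2 -!natrM -h3 natrM mulfK ?pnatr_eq0.
rewrite C2 C3 => e2 e3.
have : x * (x + 1) * (x + 2%:R) * (x - 3%:R) = 0.
  by apply: (eq_from_scaled2 (k1 := -12%:R * x) (k2 := 6%:R * x * (x - 1)) e3 e2); field.
have x3 : x - 3%:R = (m.+1)%:R by rewrite /x /n -(addn3 m.+1) natrD addrK.
rewrite x3 /x -(natrD _ n 1) -(natrD _ n 2) -!natrM => /eqP.
by rewrite pnatr_eq0 !muln_eq0.
Qed.

Lemma horner1 (R : nzRingType) (x : R) : (1 : {poly R}).[x] = 1.
Proof. by rewrite -polyC1 hornerC. Qed.

Lemma shift_from_sum (R : zmodType) (a b c : R) : a - b + c = 0 -> a = b - c.
Proof. by move/eqP; rewrite -addrA addr_eq0 opprD opprK => /eqP. Qed.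

Lemma two_neq0 (R : numDomainType) : (1 + 1 : R) != 0.
Proof. by rewrite (_ : 1 + 1 = 2%:R) // pnatr_eq0. Qed.

Definition horner_simp :=
  (horner1, horner0, hornerC, hornerXn, hornerX, hornerD, hornerN, hornerM, hornerZ, horner_exp).

Section TwoVariablePolynomials.
Variable C : numClosedFieldType.
Implicit Types p r : {poly {poly C}}.

Lemma ev2_eq0 p : (forall d l, ev2 p d l = 0) -> p = 0.
Proof.
move=> p0; apply/polyP => i; rewrite coef0; apply: poly_eq0_pt => d.
have pd0 : map_poly (horner_eval d) p = 0.
  apply: poly_eq0_pt => l; have := horner_map (horner_eval d) p l%:P.
  by rewrite /= !horner_evalE hornerC => ->; apply: p0.
by have := congr1 (fun q : {poly C} => q`_i) pd0; rewrite coef_map coef0.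
Qed.

Lemma ev2_inj p r : (forall d l, ev2 p d l = ev2 r d l) -> p = r.
Proof.
move=> pr; apply/eqP; rewrite -subr_eq0; apply/eqP; apply: ev2_eq0 => d l.
by rewrite /ev2 !horner_simp -!/(ev2 _ d l) pr subrr.
Qed.

End TwoVariablePolynomials.

Section ModuleAxiom.
Variables (C : numClosedFieldType) (c al be alb beb : C).

Definition gen_vec (X : gen) : gen -> {poly C} :=
  fun Z => match X, Z with GL, GL | GY, GY | GM, GM => 1 | _, _ => 0 end.

Definition va_vec : bas -> {poly C} := fun i => if i is Va then 1 else 0.

(* The (L, Y) component of the module axiom on v_alpha. *)
Definition Y_equation (g : {poly {poly C}}) : Prop := forall d l m,
  ev2 g (d + l) m * (d + alb * l + beb) - (d + m + al * l + be) * ev2 g d m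
  = (l / 2%:R - m + c) * ev2 g d (l + m).

Lemma is_ext_LY f g h : is_ext c al be alb beb f g h -> Y_equation g.
Proof.
move=> ext d l m; have := ext (gen_vec GL) (gen_vec GY) va_vec l m d Vb.
rewrite /actf /brk /sumg /sumb /polF /= !horner_simp /= => E.
by apply: (eq_from_scaled (k := 1) E); field.
Qed.

Lemma is_ext_YY f g h : is_ext c al be alb beb f g h -> forall d l m,
  (l - m) * (l + m - 2%:R * c) * ev2 h d (l + m) = 0.
Proof.
move=> ext d l m; have := ext (gen_vec GY) (gen_vec GY) va_vec l m d Vb.
rewrite /actf /brk /sumg /sumb /polF /= !horner_simp /= => E.
by apply: (eq_from_scaled (k := -1) E); field.
Qed.

Lemma is_ext_LL f g h : is_ext c al be alb beb f g h -> forall d l,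
  (be - beb) * ev2 f d l
  = (d + al * l + be) * ev2 f d 0 - ev2 f (d + l) 0 * (d + alb * l + beb).
Proof.
move=> ext d l; have := ext (gen_vec GL) (gen_vec GL) va_vec l 0 d Vb.
rewrite /actf /brk /sumg /sumb /polF /= !horner_simp /= !addr0 => E.
by apply: (eq_from_scaled (k := 1) E); field.
Qed.

(* h vanishes: (t - 2c) h(d, t) = 0 identically, and t - 2c is not a zero
   divisor. *)
Lemma ext_h0 f g h : is_ext c al be alb beb f g h -> h = 0.
Proof.
move=> ext.
have h_root t d : (t - 2%:R * c) * ev2 h d t = 0.
  have := is_ext_YY ext d ((t + 1) / 2%:R) ((t - 1) / 2%:R).
  have -> : (t + 1) / 2%:R + (t - 1) / 2%:R = t by field.
  have -> : (t + 1) / 2%:R - (t - 1) / 2%:R = 1 by field.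
  by rewrite mul1r.
have : ('X - (2%:R * c)%:P%:P) * h = 0.
  by apply: ev2_eq0 => d t; rewrite /ev2 !horner_simp -/(ev2 h d t) h_root.
by move/eqP; rewrite mulf_eq0 polyXsubC_eq0 => /eqP.
Qed.

(* With f = h = 0 only the (L, Y) and (Y, L) components of the axiom are
   nontrivial, and both are instances of [Y_equation]. *)
Lemma Y_equation_is_ext g : Y_equation g -> is_ext c al be alb beb 0 g 0.
Proof.
move=> Yg a b w l m d k.
rewrite /actf /brk /sumg /sumb /polF /= /ev2 !horner0 -!/(ev2 g _ _).
have -> : - (l + m) + l = - m by ring.
have -> : d + m + l = d + l + m by ring.
have -> : d + (l + m) = d + l + m by ring.
case: k => /=; last by field.
have YLY := Yg d l m; have YYL := Yg d m l; rewrite (addrC m l) in YYL.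
by apply: (eq_from_scaled2 (k1 := (a GL).[- l] * (b GY).[- m] * (w Va).[d + l + m])
   (k2 := - ((a GY).[- l] * (b GL).[- m] * (w Va).[d + l + m])) YLY YYL); field.
Qed.
End ModuleAxiom.

Section Equivalences.
Variables (C : numClosedFieldType) (c al be alb beb : C).

Definition shear (p : {poly C}) : bas -> bas -> {poly C} :=
  fun i k => match i, k with Vb, Vb | Va, Va => 1 | Va, Vb => p | Vb, Va => 0 end.

Lemma shear_fixes_ends p :
  (forall (q : {poly C}) (k : bas) (d : C),
     phiF (shear p) (fun i x => if i is Vb then q.[x] else 0) k d
     = (if k is Vb then q.[d] else 0))
  /\ (forall (w : bas -> {poly C}) (d : C), phiF (shear p) (polF w) Va d = (w Va).[d]).
Proof.
by split=> [q [] d | w d]; rewrite /phiF /sumb /shear /polF /= !horner_simp; ring.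
Qed.

(* Shearing by p = - f(d, 0) / (be - beb) removes f; the module-homomorphism
   property reduces to the (L, L) relation [is_ext_LL]. *)
Lemma equiv_remove_f f g : be != beb -> is_ext c al be alb beb f g 0 ->
  ext_equiv al be alb beb f g 0 0 g 0.
Proof.
move=> be_neq ext; have [ends_b ends_a] := shear_fixes_ends (- (be - beb)^-1 *: f.[0]).
exists (shear (- (be - beb)^-1 *: f.[0])); split=> // a w l d k.
have db_neq0 : be - beb != 0 by rewrite subr_eq0.
have fE : ev2 f d l = ((d + al * l + be) * ev2 f d 0
                       - ev2 f (d + l) 0 * (d + alb * l + beb)) / (be - beb).
  by rewrite -(is_ext_LL ext) mulrC mulrA mulVf ?mul1r.
rewrite /ev2 polyC0 in fE.
by case: k; rewrite /phiF /actf /sumg /sumb /polF /shear /= /ev2 fE ?horner_simp;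
  field; exact: db_neq0.
Qed.

(* An equivalence with the direct sum fixes v_bar, hence intertwines the Y
   actions, forcing g = 0; conversely the identity works for g = 0. *)
Lemma trivial_iff g : ext_trivial al be alb beb 0 g 0 <-> g = 0.
Proof.
split=> [[phi [hom ends_b _]] | ->].
  apply: ev2_eq0 => d l.
  have phi_bb : (phi Vb Vb).[d] = 1.
    by have := ends_b 1 Vb d; rewrite /phiF /sumb /= !horner_simp mul1r mul0r addr0.
  have := hom (gen_vec C GY) (va_vec C) l d Vb.
  rewrite /phiF /actf /sumg /sumb /polF /= /ev2 !horner_simp -/(ev2 g d l) phi_bb => E.
  by apply: (eq_from_scaled (k := 1) E); field.
have [ends_b ends_a] := shear_fixes_ends 0.
exists (shear 0); split=> // a w l d k.
by case: k; rewrite /phiF /actf /sumg /sumb /polF /shear /= /ev2 !horner_simp; ring.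
Qed.
End Equivalences.

Section Families.
Variables (C : numClosedFieldType) (c al be alb beb : C).
Hypothesis be_beb : be - beb + c = 0.

Definition g_deg1 : {poly {poly C}} :=
  Dpar C + cst (2%:R * alb) * Lam C + cst (- (2%:R * alb * c) + beb).

Definition g_deg2 : {poly {poly C}} :=
  Dpar C ^+ 2 + cst (2%:R * (1 + 2%:R * alb)) * Dpar C * Lam C
  + cst (2%:R * alb) * Lam C ^+ 2
  + cst (2%:R * beb - 2%:R * (1 + 2%:R * alb) * c) * Dpar C
  + cst (- (4%:R * c * alb) + 2%:R * (1 + 2%:R * alb) * beb) * Lam C
  + cst (beb ^+ 2 - 2%:R * c * beb * (1 + 2%:R * alb) + 2%:R * c ^+ 2 * alb).

Definition g_family (g : {poly {poly C}}) : Prop :=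
  exists2 k : C, k != 0 &
    [\/ al - alb = - (2%:R)^-1 /\ g = cst k * 1,
        al - alb = (2%:R)^-1 /\ g = cst k * g_deg1
      | al = 1 /\ alb = - (2%:R)^-1 /\ g = cst k * g_deg2].

Lemma g_family_Y_equation g : g_family g -> Y_equation c al be alb beb g.
Proof.
case=> k _ [[al_alb ->] | [al_alb ->] | [al1 [alb_h ->]]] d l m;
  rewrite /g_deg1 /g_deg2 /ev2 /cst /Dpar /Lam !horner_simp (shift_from_sum be_beb).
- by rewrite (_ : al = alb - 2%:R^-1); [field | rewrite -al_alb; ring].
- by rewrite (_ : al = alb + 2%:R^-1); [field | rewrite -al_alb; ring].
- by rewrite al1 alb_h; field.
Qed.
End Families.

Section ShiftedEquation.
Variables (C : numClosedFieldType) (c al be alb beb : C) (g : {poly {poly C}}).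
Hypothesis alb_neq0 : alb != 0.
Hypothesis be_beb : be - beb + c = 0.
Hypothesis Yg : Y_equation c al be alb beb g.

Definition gshift (x y : C) : C := ev2 g (x - beb) (y + c).

(* [Y_equation] in shifted coordinates (the constant terms cancel since
   be = beb - c). *)
Lemma gshift_star x y l :
  gshift (x + l) y * (x + alb * l) - (x + y + al * l) * gshift x y = (l / 2%:R - y) * gshift x (l + y).
Proof.
have := Yg (x - beb) l (y + c); rewrite /gshift (shift_from_sum be_beb).
have -> : x - beb + l = x + l - beb by ring.
have -> : l + (y + c) = l + y + c by ring.
move=> E; apply: (eq_from_scaled (k := 1) E); ring.
Qed.

Definition Qslice : {poly C} := map_poly (horner_eval (- beb)) g \Po ('X + c%:P).

Lemma QsliceE y : Qslice.[y] = gshift 0 y.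
Proof.
rewrite /Qslice horner_comp !horner_simp /gshift sub0r.
by have := horner_map (horner_eval (- beb)) g (y + c)%:P; rewrite /= !horner_evalE hornerC.
Qed.

Definition Xslice (y : C) : {poly C} := g.[(y + c)%:P] \Po ('X - beb%:P).

Lemma XsliceE y x : (Xslice y).[x] = gshift x y.
Proof. by rewrite /Xslice horner_comp !horner_simp. Qed.

(* Differentiating the star equation at x = 0 (as a polynomial in the
   increment l) gives Euler's equation for the slice. *)
Lemma Qslice_euler y : y * (Qslice^`()).[y] = (al - alb + 2%:R^-1) * Qslice.[y].
Proof.
have star0 : alb *: ('X * Xslice y) - (y%:P + al *: 'X) * (Qslice.[y])%:P
   - (2%:R^-1 *: 'X - y%:P) * (Qslice \Po ('X + y%:P)) = 0.
  apply: poly_eq0_pt => x.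
  rewrite !horner_simp XsliceE QsliceE horner_comp !horner_simp QsliceE.
  have := gshift_star 0 y x; rewrite !add0r (addrC x y) => E.
  by apply: (eq_from_scaled (k := 1) E); field.
have := congr1 (fun p : {poly C} => (p^`()).[0]) star0.
rewrite /= !derivE (deriv_comp Qslice) !derivE !horner_simp !(horner_comp Qslice).
rewrite (horner_comp Qslice^`()) !horner_simp XsliceE -QsliceE !add0r.
by move=> E; apply: (eq_from_scaled (k := 1) E); field.
Qed.

(* At x = 0 the star equation gives alb l gshift l y in terms of the slice,
   so a vanishing slice forces g = 0. *)
Lemma g_eq0_of_slice : (forall y, gshift 0 y = 0) -> g = 0.
Proof.
move=> slice0; apply: ev2_eq0 => d l.
have -> : ev2 g d l = gshift (d + beb) (l - c) by rewrite /gshift addrK subrK.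
have [-> | x_neq0] := eqVneq (d + beb) 0; first exact: slice0.
have := gshift_star 0 (l - c) (d + beb); rewrite !add0r !slice0 !mulr0 subr0 => /eqP.
by rewrite !mulf_eq0 (negbTE alb_neq0) (negbTE x_neq0) /= orbF => /eqP.
Qed.

Lemma slice_monomial : g != 0 -> exists n q,
  [/\ q != 0, al - alb + 2%:R^-1 = n%:R & forall y, gshift 0 y = q * y ^+ n].
Proof.
move=> g_neq0.
have Q_neq0 : Qslice != 0.
  apply: contra g_neq0 => /eqP Q0; apply/eqP; apply: g_eq0_of_slice => y.
  by rewrite -QsliceE Q0 horner0.
have euler : 'X * Qslice^`() = (al - alb + 2%:R^-1) *: Qslice.
  by apply/eqP; rewrite -subr_eq0; apply/eqP; apply: poly_eq0_pt => y;
     rewrite !horner_simp Qslice_euler subrr.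
have [N_deg Q_mono] := euler_monomial euler Q_neq0.
exists (size Qslice).-1, (lead_coef Qslice); split=> // [|y].
  by rewrite lead_coef_eq0.
by rewrite -QsliceE {1}Q_mono !horner_simp.
Qed.
End ShiftedEquation.

Section MonomialSlice.
Variables (C : numClosedFieldType) (c al be alb beb : C) (g : {poly {poly C}}).
Hypothesis alb_neq0 : alb != 0.
Hypothesis be_beb : be - beb + c = 0.
Hypothesis Yg : Y_equation c al be alb beb g.
Variables (n : nat) (q : C).
Hypothesis q_neq0 : q != 0.
Hypothesis al_alb : al - alb + 2%:R^-1 = n%:R.
Hypothesis slice_eq : forall y, gshift c beb g 0 y = q * y ^+ n.

Local Notation gshift := (gshift c beb g).

Lemma star_at_origin x y :
  alb * x * gshift x y = (y + al * x) * (q * y ^+ n) + (x / 2%:R - y) * (q * (x + y) ^+ n).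
Proof.
have := gshift_star be_beb Yg 0 y x; rewrite !add0r !slice_eq (addrC x y) => E.
by apply: (eq_from_scaled (k := 1) E); ring.
Qed.

Lemma gshift_formula x y : x != 0 ->
  gshift x y = ((y + al * x) * (q * y ^+ n) + (x / 2%:R - y) * (q * (x + y) ^+ n)) / (alb * x).
Proof. by move=> x_neq0; rewrite -star_at_origin; field; rewrite alb_neq0 x_neq0. Qed.

(* The star equation at x = 1, y = 0, increment t, after substituting the
   explicit formula and clearing denominators. *)
Lemma star_at_one t : (0 < n)%N -> t + 1 != 0 ->
  (t + 1) ^+ n * (1 + (alb - 2%:R^-1) * t + t ^+ 2)
  = 1 + al * t + al * t ^+ n.+1 + t ^+ n.+2.
Proof.
move=> n_gt0 t1_neq0; have zero_n : 0 ^+ n = 0 :> C by rewrite expr0n eqn0Ngt n_gt0.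
have := gshift_star be_beb Yg 1 0 t.
rewrite !gshift_formula ?oner_neq0 ?(addrC 1 t) // !addr0 !add0r zero_n expr1n !(addrC 1 t) => E.
apply: (eq_from_scaled (k := 2%:R * alb / q) E); rewrite !exprS; field.
by rewrite alb_neq0 t1_neq0 q_neq0.
Qed.

(* For n >= 4 the identity [star_at_one] holds for all t <> -1, hence as
   polynomials, contradicting [binomial_trinomial_neq]. *)
Lemma slice_degree_lt4 : (n < 4)%N.
Proof.
rewrite ltnNge; apply/negP => n_ge4; have n_gt0 : (0 < n)%N by apply: leq_trans n_ge4.
apply: (binomial_trinomial_neq (a := alb - 2%:R^-1) (b := al) n_ge4).
apply/eqP; rewrite -subr_eq0; apply/eqP.
have : ('X - (-1)%:P) * (('X + 1) ^+ n * (1 + (alb - 2%:R^-1) *: 'X + 'X^2)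
          - (1 + al *: 'X + al *: 'X^(n.+1) + 'X^(n.+2))) = 0.
  apply: poly_eq0_pt => t; rewrite hornerM hornerXsubC opprK.
  have [-> | t1_neq0] := eqVneq (t + 1) 0; first by rewrite mul0r.
  by rewrite !horner_simp star_at_one // subrr mulr0.
by move/eqP; rewrite mulf_eq0 polyXsubC_eq0 => /eqP.
Qed.

(* For n = 3, [star_at_one] at t = 1 forces alb = -5/6, and the star
   equation at x = y = l = 1 then forces q = 0. *)
Lemma slice_degree_neq3 : n != 3%N.
Proof.
apply/eqP => n3.
have al_eq : al = alb + 5%:R / 2%:R.
  by move: al_alb; rewrite n3 => E; apply: (eq_from_scaled (k := 1) E); field.
have alb_eq : alb = - (5%:R / 6%:R).
  have := star_at_one (t := 1); rewrite n3 al_eq => /(_ isT (two_neq0 C)) E.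
  by apply: (eq_from_scaled (k := 6%:R^-1) E); field.
have := gshift_star be_beb Yg 1 1 1.
rewrite !gshift_formula ?oner_neq0 ?two_neq0 // n3 al_eq alb_eq => E.
have q0 : q = 0 by apply: (eq_from_scaled (k := 5%:R / 2%:R) E); field.
by move: q_neq0; rewrite q0 eqxx.
Qed.

Lemma slice_determines (F : {poly {poly C}}) :
  (forall x y, x != 0 -> alb * x * ev2 F (x - beb) (y + c)
     = (y + al * x) * (q * y ^+ n) + (x / 2%:R - y) * (q * (x + y) ^+ n)) ->
  (forall y, ev2 F (- beb) (y + c) = q * y ^+ n) -> g = F.
Proof.
move=> F_star F_slice; apply: ev2_inj => d l.
have -> : ev2 g d l = gshift (d + beb) (l - c) by rewrite /gshift addrK subrK.
have -> : ev2 F d l = ev2 F (d + beb - beb) (l - c + c) by rewrite addrK subrK.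
have [x0 | x_neq0] := eqVneq (d + beb) 0; first by rewrite x0 sub0r F_slice slice_eq.
by apply: (mulfI (mulf_neq0 alb_neq0 x_neq0)); rewrite star_at_origin F_star.
Qed.

(* The cases n = 0, 1, 2 give the three families (for n = 2, [star_at_one]
   at t = 1 forces alb = -1/2). *)
Lemma slice_family : g_family c al alb beb g.
Proof.
have : [\/ n = 0%N, n = 1%N | n = 2%N].
  by move: slice_degree_lt4 slice_degree_neq3; case: (n) => [|[|[|[|]]]]; constructor.
case=> n_eq; move: al_alb; rewrite n_eq => N_eq.
- have al_eq : al = alb - 2%:R^-1 by apply: (eq_from_scaled (k := 1) N_eq); field.
  exists q => //; apply: Or31; split; first by rewrite al_eq; field.
  by apply: slice_determines => [x y x_neq0 | y]; rewrite n_eq /ev2 !horner_simp ?al_eq; field.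
- have al_eq : al = alb + 2%:R^-1 by apply: (eq_from_scaled (k := 1) N_eq); field.
  exists (q / (2%:R * alb)); first by rewrite mulf_neq0 ?invr_eq0 ?mulf_neq0 ?pnatr_eq0.
  apply: Or32; split; first by rewrite al_eq; field.
  apply: slice_determines => [x y x_neq0 | y];
    by rewrite n_eq /g_deg1 /ev2 /cst /Dpar /Lam !horner_simp ?al_eq; field.
- have al_eq : al = alb + 3%:R / 2%:R by apply: (eq_from_scaled (k := 1) N_eq); field.
  have alb_eq : alb = - 2%:R^-1.
    have := star_at_one (t := 1); rewrite n_eq al_eq => /(_ isT (two_neq0 C)) E.
    by apply: (eq_from_scaled (k := 2%:R^-1) E); field.
  have al1 : al = 1 by rewrite al_eq alb_eq; field.
  exists (- q); first by rewrite oppr_eq0.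
  apply: Or33; split=> //; split=> //.
  apply: slice_determines => [x y x_neq0 | y];
    by rewrite n_eq /g_deg2 /ev2 /cst /Dpar /Lam !horner_simp ?al1 alb_eq; field.
Qed.
End MonomialSlice.

Lemma Y_equation_family (C : numClosedFieldType) (c al be alb beb : C) (g : {poly {poly C}}) :
  alb != 0 -> be - beb + c = 0 -> g != 0 -> Y_equation c al be alb beb g ->
  g_family c al alb beb g.
Proof.
move=> alb_neq0 be_beb g_neq0 Yg.
have [n [q [q_neq0 al_alb slice_eq]]] := slice_monomial alb_neq0 be_beb Yg g_neq0.
exact: (slice_family alb_neq0 be_beb Yg q_neq0 al_alb slice_eq).
Qed.

Theorem theorem4p8 (C : numClosedFieldType) (c al be alb beb : C) :
  al != 0 -> alb != 0 -> be != beb -> be - beb + c = 0 ->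
  [/\ (forall f g h : {poly {poly C}}, is_ext c al be alb beb f g h -> h = 0),
      (forall f g h : {poly {poly C}}, is_ext c al be alb beb f g h ->
         exists g' h' : {poly {poly C}},
           is_ext c al be alb beb 0 g' h' /\ ext_equiv al be alb beb f g h 0 g' h'),
      (forall g : {poly {poly C}}, is_ext c al be alb beb 0 g 0 ->
         (~ ext_trivial al be alb beb 0 g 0 <-> g != 0))
    & (forall g : {poly {poly C}}, g != 0 ->
         (is_ext c al be alb beb 0 g 0 <->
          exists2 k : C, k != 0 &
            [\/ al - alb = - (2%:R)^-1 /\ g = cst k * 1,
                al - alb = (2%:R)^-1 /\
                  g = cst k * (Dpar C + cst (2%:R * alb) * Lam C
                               + cst (- (2%:R * alb * c) + beb))
              | al = 1 /\ alb = - (2%:R)^-1 /\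
                  g = cst k * (Dpar C ^+ 2 + cst (2%:R * (1 + 2%:R * alb)) * Dpar C * Lam C
                       + cst (2%:R * alb) * Lam C ^+ 2
                       + cst (2%:R * beb - 2%:R * (1 + 2%:R * alb) * c) * Dpar C
                       + cst (- (4%:R * c * alb) + 2%:R * (1 + 2%:R * alb) * beb) * Lam C
                       + cst (beb ^+ 2 - 2%:R * c * beb * (1 + 2%:R * alb)
                              + 2%:R * c ^+ 2 * alb))]))].
Proof.
move=> _ alb_neq0 be_neq be_beb; split.
- exact: ext_h0.
- move=> f g h ext; have h0 := ext_h0 ext; subst h.
  by exists g, 0; split; [apply/Y_equation_is_ext/(is_ext_LY ext) | apply: equiv_remove_f].
- by move=> g _; rewrite trivial_iff; split=> [/eqP | /eqP].
- move=> g g_neq0; split=> [ext | fam].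
    exact: Y_equation_family alb_neq0 be_beb g_neq0 (is_ext_LY ext).
  exact/Y_equation_is_ext/(g_family_Y_equation be_beb).
Qed.
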